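(* Let $Q$ be a latin quandle and $u\in Q$. If the subquandle $\mathrm{Sg}(u,x,y)$ is simply connected for every $x,y\in Q$, then $Q$ is simply connected.
   Context: A quandle is a set $Q$ with a binary operation $*$ such that every left translation $L_x:y\mapsto x*y$ is bijective, $x*(y*z)=(x*y)*(x*z)$ and $x*x=x$; left division is $x\backslash y=L_x^{-1}(y)$. $Q$ is latin if every right translation $y\mapsto y*x$ is bijective, and connected if $\langle L_x:x\in Q\rangle$ is transitive. $\mathrm{Sg}(u,x,y)$ is the smallest subset of $Q$ containing $u,x,y$ and closed under $*$ and $\backslash$. For a set $S$, a quandle cocycle with values in $\mathrm{Sym}_S$ is $\theta:Q\times Q\to\mathrm{Sym}_S$ with $\theta_{x*y,x*z}\theta_{x,z}=\theta_{x,y*z}\theta_{y,z}$ and $\theta_{x,x}=1$; it is cohomologous to the trivial cocycle if there is $\gamma:Q\to\mathrm{Sym}_S$ with $\theta_{x,y}=\gamma_{x*y}\gamma_y^{-1}$ for all $x,y$. A quandle is simply connected if it is connected and, for every set $S$, every such cocycle is cohomologous to the trivial cocycle. *)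

From mathcomp Require Import ssreflect ssrfun ssrbool.
Set Implicit Arguments.
Unset Strict Implicit.

Section Quandles.
Variables (Q : Type) (op : Q -> Q -> Q) (ldiv : Q -> Q -> Q).
(* op x y = x * y ; ldiv x y = x \ y = L_x^{-1}(y) *)

Definition is_quandle : Prop :=
  [/\ forall x y, op x (ldiv x y) = y,
      forall x y, ldiv x (op x y) = y,
      forall x y z, op x (op y z) = op (op x y) (op x z)
    & forall x, op x x = x].

Definition latin : Prop := forall x, bijective (fun y => op y x).

Inductive Sg (u x y : Q) : Q -> Prop :=
  | Sg_u : Sg u x y u
  | Sg_x : Sg u x y x
  | Sg_y : Sg u x y y
  | Sg_op a b : Sg u x y a -> Sg u x y b -> Sg u x y (op a b)
  | Sg_ldiv a b : Sg u x y a -> Sg u x y b -> Sg u x y (ldiv a b).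

(* For a subset A closed under * and \ (a subquandle, with the inherited
   operations): orbit of a under the group generated by L_x, x in A. *)
Inductive orbit_in (A : Q -> Prop) (a : Q) : Q -> Prop :=
  | orb_refl : orbit_in A a a
  | orb_L x b : A x -> orbit_in A a b -> orbit_in A a (op x b)
  | orb_Linv x b : A x -> orbit_in A a b -> orbit_in A a (ldiv x b).

Definition connected_on (A : Q -> Prop) : Prop :=
  forall a b, A a -> A b -> orbit_in A a b.

(* Quandle cocycle on A with values in Sym_S, composition (f g)(s) = f (g s). *)
Definition cocycle_on (A : Q -> Prop) (S : Type) (theta : Q -> Q -> S -> S)
  : Prop :=
  [/\ forall x y, A x -> A y -> bijective (theta x y),
      forall x y z, A x -> A y -> A z -> forall s,
        theta (op x y) (op x z) (theta x z s) = theta x (op y z) (theta y z s)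
    & forall x, A x -> forall s, theta x x s = s].

(* theta_{x,y} = gamma_{x*y} gamma_y^{-1}, written as
   theta_{x,y} o gamma_y = gamma_{x*y} (gamma_y bijective). *)
Definition cohomologous_trivial_on (A : Q -> Prop) (S : Type)
  (theta : Q -> Q -> S -> S) : Prop :=
  exists gamma : Q -> S -> S,
    (forall x, A x -> bijective (gamma x)) /\
    (forall x y, A x -> A y -> forall s,
        theta x y (gamma y s) = gamma (op x y) s).

Definition simply_connected_on (A : Q -> Prop) : Prop :=
  connected_on A /\
  forall (S : Type) (theta : Q -> Q -> S -> S),
    cocycle_on A theta -> cohomologous_trivial_on A theta.

End Quandles.

From mathcomp Require Import ssreflect ssrfun ssrbool.
From Stdlib Require Import ClassicalEpsilon.

Set Implicit Arguments.
Unset Strict Implicit.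

(* Normalise a trivialisation of the cocycle on each subquandle Sg(u,x,y) so
   that it is the identity at u.  Since Sg(u,x,y) is connected, such a
   normalised trivialisation is unique, and it restricts to the normalised one
   on Sg(u,z,z) for every z in Sg(u,x,y).  Hence gamma_z, read off from
   Sg(u,z,z), is independent of the subquandle used, and these values glue to
   a global trivialisation. *)

Section Subquandles.
Variables (Q : Type) (op ldiv : Q -> Q -> Q).

Definition subquandle (A : Q -> Prop) : Prop :=
  (forall a b, A a -> A b -> A (op a b)) /\
  (forall a b, A a -> A b -> A (ldiv a b)).

Definition trivializes (A : Q -> Prop) S (theta : Q -> Q -> S -> S)
    (gamma : Q -> S -> S) : Prop :=
  forall x y, A x -> A y -> forall s, theta x y (gamma y s) = gamma (op x y) s.

Lemma Sg_subquandle u x y : subquandle (Sg op ldiv u x y).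
Proof. by split=> a b; [apply: Sg_op | apply: Sg_ldiv]. Qed.

Lemma Sg_min (A : Q -> Prop) u x y :
  subquandle A -> A u -> A x -> A y -> forall z, Sg op ldiv u x y z -> A z.
Proof. by move=> [Aop Ald] Au Ax Ay z; elim=> //; auto. Qed.

Lemma orbit_in_mono (A B : Q -> Prop) a b :
  (forall z, A z -> B z) -> orbit_in op ldiv A a b -> orbit_in op ldiv B a b.
Proof.
move=> AB; elim=> [|x c Ax _ IH|x c Ax _ IH]; first exact: orb_refl.
- exact: orb_L (AB _ Ax) IH.
- exact: orb_Linv (AB _ Ax) IH.
Qed.

Lemma cocycle_on_sub (A B : Q -> Prop) S (theta : Q -> Q -> S -> S) :
  (forall z, A z -> B z) -> cocycle_on op B theta -> cocycle_on op A theta.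
Proof. by move=> AB [Hbij Hcoc Hid]; split=> *; auto. Qed.

Lemma trivializes_sub (A B : Q -> Prop) S (theta : Q -> Q -> S -> S) gamma :
  (forall z, A z -> B z) -> trivializes B theta gamma -> trivializes A theta gamma.
Proof. by move=> AB Hg x y Ax Ay; apply: Hg; apply: AB. Qed.

Lemma trivialization_unique (A : Q -> Prop) S (theta : Q -> Q -> S -> S) u
    (g g' : Q -> S -> S) :
  is_quandle op ldiv -> subquandle A -> connected_on op ldiv A -> A u ->
  cocycle_on op A theta -> trivializes A theta g -> trivializes A theta g' ->
  g u =1 g' u -> forall b, A b -> g b =1 g' b.
Proof.
move=> [opK _ _ _] [Aop Ald] Acon Au [Hbij _ _] Hg Hg' gu b Ab.
suff: A b /\ g b =1 g' b by case.
elim: (Acon u b Au Ab) => [|x c Ax _ [Ac IH]|x c Ax _ [Ac IH]]; first by [].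
- by split=> [|s]; [apply: Aop | rewrite -Hg // -Hg' // IH].
- have Ad := Ald _ _ Ax Ac; split=> // s.
  apply: (bij_inj (Hbij x _ Ax Ad)).
  by rewrite Hg // Hg' // opK IH.
Qed.

Lemma normalized_trivialization (A : Q -> Prop) S (theta : Q -> Q -> S -> S) u :
  simply_connected_on op ldiv A -> A u -> cocycle_on op A theta ->
  exists gamma : Q -> S -> S,
    [/\ forall a, A a -> bijective (gamma a), trivializes A theta gamma
      & gamma u =1 id].
Proof.
move=> [_ Hsc] Au Htheta.
have [g [gbij gtriv]] := Hsc S theta Htheta.
have [h gK hK] := gbij u Au.
exists (fun a s => g a (h s)); split=> [a Aa||s /=].
- by apply: bij_comp; [apply: gbij | exists (g u)].
- by move=> x y Ax Ay s; apply: gtriv.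
- exact: hK.
Qed.

End Subquandles.

Section Gluing.
Variables (Q : Type) (op ldiv : Q -> Q -> Q) (u : Q).
Hypothesis quandleQ : is_quandle op ldiv.
Hypothesis Sg_simply_connected :
  forall x y, simply_connected_on op ldiv (Sg op ldiv u x y).
Variables (S : Type) (theta : Q -> Q -> S -> S).
Hypothesis theta_cocycle : cocycle_on op (fun _ => True) theta.

Local Notation Sgu := (Sg op ldiv u).

Lemma Sg_normalized_trivialization x y :
  exists gamma : Q -> S -> S,
    [/\ forall a, Sgu x y a -> bijective (gamma a),
        trivializes op (Sgu x y) theta gamma & gamma u =1 id].
Proof.
apply: normalized_trivialization; first exact: Sg_simply_connected.
- exact: Sg_u.
- exact: cocycle_on_sub theta_cocycle.
Qed.

Definition glued_gamma (z : Q) : S -> S :=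
  proj1_sig (constructive_indefinite_description _
    (Sg_normalized_trivialization z z)) z.

Lemma glued_gammaP z :
  exists gamma : Q -> S -> S,
    [/\ forall a, Sgu z z a -> bijective (gamma a),
        trivializes op (Sgu z z) theta gamma, gamma u =1 id
      & gamma z = glued_gamma z].
Proof.
rewrite /glued_gamma.
case: constructive_indefinite_description => gamma [? ? ?] /=.
by exists gamma.
Qed.

Lemma glued_gamma_unique x y (d : Q -> S -> S) :
  trivializes op (Sgu x y) theta d -> d u =1 id ->
  forall z, Sgu x y z -> d z =1 glued_gamma z.
Proof.
move=> dtriv du z Sz.
have [g [_ gtriv gu <-]] := glued_gammaP z.
have sub : forall w, Sgu z z w -> Sgu x y w.
  by apply: Sg_min; [exact: Sg_subquandle | exact: Sg_u | exact: Sz | exact: Sz].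
apply: (trivialization_unique (theta := theta) (u := u) quandleQ (A := Sgu z z)) => //.
- exact: Sg_subquandle.
- by case: (Sg_simply_connected z z).
- exact: Sg_u.
- exact: cocycle_on_sub theta_cocycle.
- exact: trivializes_sub sub dtriv.
- by move=> s; rewrite du gu.
- exact: Sg_x.
Qed.

Lemma glued_gamma_bijective z : bijective (glued_gamma z).
Proof. by have [g [gbij _ _ <-]] := glued_gammaP z; apply: gbij; apply: Sg_x. Qed.

Lemma glued_gamma_trivializes : trivializes op (fun _ => True) theta glued_gamma.
Proof.
move=> x y _ _ s.
have [d [_ dtriv du]] := Sg_normalized_trivialization x y.
have Sxy : Sgu x y (op x y) by apply: Sg_op; [apply: Sg_x | apply: Sg_y].
rewrite -(glued_gamma_unique dtriv du (Sg_y _ _ _ _ _)).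
rewrite -(glued_gamma_unique dtriv du Sxy).
by apply: dtriv; [apply: Sg_x | apply: Sg_y].
Qed.

End Gluing.

Theorem proposition3p6 (Q : Type) (op ldiv : Q -> Q -> Q) (u : Q) :
  is_quandle op ldiv -> latin op ->
  (forall x y : Q, simply_connected_on op ldiv (Sg op ldiv u x y)) ->
  simply_connected_on op ldiv (fun _ : Q => True).
Proof.
move=> quandleQ _ Hsc; split=> [a b _ _ | S theta Htheta].
- have [Hcon _] := Hsc a b.
  by apply: (orbit_in_mono (A := Sg op ldiv u a b)); last apply: Hcon; constructor.
- exists (glued_gamma Hsc Htheta); split=> [x _|].
  + exact: glued_gamma_bijective.
  + exact: glued_gamma_trivializes.
Qed.
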